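(* Let $T_C$ be a finite complete binary tree whose root has two children, and let $T_C'$ and $T_C''$ be the subtrees of $T_C$ rooted at the left and right child of the root, respectively. Then $$\mathcal{S}(T_C) = \mathcal{S}(T_C') \cup \mathcal{S}(T_C'') \cup \big(B_r(T_C') \times B_l(T_C'')\big).$$
   Context: All trees are rooted, and children are designated left or right. A complete binary tree is a rooted tree in which every non-leaf vertex has exactly two children. A full binary tree is a rooted tree in which every vertex has 0 or 2 children. An internal tree of a complete binary tree $T_C$ is a full binary tree $T$ with $\mathrm{root}(T)=\mathrm{root}(T_C)$ whose vertices and edges are a subset of those of $T_C$ (left/right children as in $T_C$); $\mathcal{T}(T_C)$ is the set of all internal trees of $T_C$. For a tree $T$, $L(T)=(L_1(T),\dots,L_{|L(T)|}(T))$ is the sequence of its leaves from left-most to right-most. The set of successive leaf transitions of $T_C$ is $$\mathcal{S}(T_C) = \bigcup_{T\in\mathcal{T}(T_C)} \{(L_n(T), L_{n+1}(T)) : 1 \le n < |L(T)|\}.$$ The left boundary $B_l(T_C)$ is the set $\{\mathrm{left}^k(\mathrm{root}(T_C)) : k\ge 0\}$ of vertices reached from the root by repeatedly taking left children (including the root); the right boundary $B_r(T_C)$ is defined symmetrically with right children. *)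

From mathcomp Require Import all_boot.
Set Implicit Arguments. Unset Strict Implicit. Unset Printing Implicit Defensive.

(* Vertices of a tree are addressed by their path from the root:
   a [seq bool], where [false] = go to the left child, [true] = go to the
   right child.  The root is [::]. *)
Inductive btree : Type := BLeaf | BNode of btree & btree.

Fixpoint vertex (t : btree) (p : seq bool) : bool :=
  match p, t with
  | [::], _ => true
  | b :: p', BNode l r => vertex (if b then r else l) p'
  | _ :: _, BLeaf => false
  end.

(* [internal T TC] : T (a full binary tree) is an internal tree of TC: same
   root, vertices/edges a subset of those of TC with the same left/right
   children.  Since T is full, every vertex of T is either a leaf of T or has
   both of its TC-children in T. *)
Fixpoint internal (T TC : btree) : bool :=
  match T, TC with
  | BLeaf, _ => true
  | BNode l r, BNode l' r' => internal l l' && internal r r'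
  | BNode _ _, BLeaf => false
  end.

Fixpoint leaves (t : btree) : seq (seq bool) :=
  match t with
  | BLeaf => [:: [::]]
  | BNode l r => map (cons false) (leaves l) ++ map (cons true) (leaves r)
  end.

Definition succ_trans (TC : btree) (x y : seq bool) : Prop :=
  exists T, internal T TC /\
    exists n, n.+1 < size (leaves T) /\
      x = nth [::] (leaves T) n /\ y = nth [::] (leaves T) n.+1.

Definition left_boundary (TC : btree) (v : seq bool) : Prop :=
  exists k, vertex TC (nseq k false) /\ v = nseq k false.
Definition right_boundary (TC : btree) (v : seq bool) : Prop :=
  exists k, vertex TC (nseq k true) /\ v = nseq k true.

From mathcomp Require Import all_boot.

Set Implicit Arguments.
Unset Strict Implicit.
Unset Printing Implicit Defensive.

(* The leaves of an internal tree [BNode Tl Tr] are those of [Tl] followed by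
   those of [Tr], so two consecutive leaves are consecutive in [Tl], or in
   [Tr], or are the last leaf of [Tl] followed by the first leaf of [Tr].  The
   last leaves of the internal trees of a tree are exactly its right-boundary
   vertices, since the last leaf is reached by always turning right; likewise
   first leaves and the left boundary. *)

Section Adjacent.

Variable T : Type.
Implicit Types (s p q : seq T) (x y : T).

Definition adjacent s x y := exists p q, s = p ++ x :: y :: q.

Lemma adjacent_nthP x0 s x y :
  adjacent s x y <->
  exists n, n.+1 < size s /\ x = nth x0 s n /\ y = nth x0 s n.+1.
Proof.
split=> [[p [q ->]] | [n [lt_n1 [-> ->]]]].
  exists (size p); rewrite size_cat /= !addnS !ltnS leq_addr.
  by rewrite !nth_cat ltnn ltnNge leqnSn subnn subSnn.
exists (take n s), (drop n.+2 s).
by rewrite -(drop_nth x0 lt_n1) -(drop_nth x0 (ltnW lt_n1)) cat_take_drop.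
Qed.

Lemma adjacent_cat s1 s2 x y :
  adjacent (s1 ++ s2) x y <->
  adjacent s1 x y \/ adjacent s2 x y \/
  exists p q, s1 = rcons p x /\ s2 = y :: q.
Proof.
split=> [[p [q]] | [[p [q ->]] | [[p [q ->]] | [p [q [-> ->]]]]]].
- elim: s1 p => [|a s1 IH] [|c p] /=; try by right; left; exists [::], q.
  + by move=> ->; right; left; exists (c :: p), q.
  + case: s1 {IH} => [[-> ->] | b s1 [-> -> _]].
      by right; right; exists [::], q.
    by left; exists [::], s1.
  + case=> -> /IH [[p' [q' ->]] | [Hs2 | [p' [q' [-> ->]]]]].
    * by left; exists (c :: p'), q'.
    * by right; left.
    * by right; right; exists (c :: p'), q'.
- by exists p, (q ++ s2); rewrite -catA.
- by exists (s1 ++ p), q; rewrite catA.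
- by exists p, q; rewrite cat_rcons.
Qed.

End Adjacent.

Lemma adjacent_map (T U : Type) (f : T -> U) (s : seq T) (x y : U) :
  adjacent (map f s) x y <->
  exists x' y', adjacent s x' y' /\ x = f x' /\ y = f y'.
Proof.
split=> [[p [q]] | [x' [y' [[p [q ->]] [-> ->]]]]]; last first.
  by exists (map f p), (map f q); rewrite map_cat.
elim: s p => [|a s IH] [|c p] //=.
  case: s {IH} => [|b s] // [<- <- _].
  by exists a, b; split=> //; exists [::], s.
case=> _ /IH [x' [y' [[p' [q' ->]] Exy]]].
by exists x', y'; split=> //; exists (a :: p'), q'.
Qed.

Lemma succ_transE TC x y :
  succ_trans TC x y <-> exists2 T, internal T TC & adjacent (leaves T) x y.
Proof.
split=> [[T [HT /(adjacent_nthP [::]) Hadj]] | [T HT /(adjacent_nthP [::]) Hadj]].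
  by exists T.
by exists T.
Qed.

Fixpoint right_height (t : btree) : nat :=
  if t is BNode _ r then (right_height r).+1 else 0.

Fixpoint left_height (t : btree) : nat :=
  if t is BNode l _ then (left_height l).+1 else 0.

Lemma leaves_last t : exists p, leaves t = rcons p (nseq (right_height t) true).
Proof.
elim: t => [|tl _ tr [p E]] /=; first by exists [::].
exists (map (cons false) (leaves tl) ++ map (cons true) p).
by rewrite E map_rcons rcons_cat.
Qed.

Lemma leaves_head t : exists q, leaves t = nseq (left_height t) false :: q.
Proof.
elim: t => [|tl [q E] tr _] /=; first by exists [::].
by exists (map (cons false) q ++ map (cons true) (leaves tr)); rewrite E.
Qed.

Lemma right_boundaryP TC x :
  right_boundary TC x <->
  exists2 T, internal T TC & x = nseq (right_height T) true.
Proof.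
split=> [[k [Hk ->]] | [T HT ->]].
  elim: k TC Hk => [|k IH] [|l r] //= Hk; try by exists BLeaf.
  by have [T HT ->] := IH r Hk; exists (BNode BLeaf T).
exists (right_height T); split=> //.
by elim: T TC HT => [|_ _ Tr IH] [|l r] //= /andP [_ /IH].
Qed.

Lemma left_boundaryP TC y :
  left_boundary TC y <->
  exists2 T, internal T TC & y = nseq (left_height T) false.
Proof.
split=> [[k [Hk ->]] | [T HT ->]].
  elim: k TC Hk => [|k IH] [|l r] //= Hk; try by exists BLeaf.
  by have [T HT ->] := IH l Hk; exists (BNode T BLeaf); rewrite //= HT.
exists (left_height T); split=> //.
by elim: T TC HT => [|Tl IH _ _] [|l r] //= /andP [+ _] => /IH.
Qed.

Theorem mainTheorem5 (l r : btree) (x y : seq bool) :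
  succ_trans (BNode l r) x y <->
  (exists x' y', succ_trans l x' y' /\ x = false :: x' /\ y = false :: y') \/
  (exists x' y', succ_trans r x' y' /\ x = true :: x' /\ y = true :: y') \/
  (exists x' y', right_boundary l x' /\ left_boundary r y' /\
                 x = false :: x' /\ y = true :: y').
Proof.
split.
- case/succ_transE=> -[|Tl Tr] HT; first by case=> -[|? [|? ?]] [].
  case/andP: HT => HTl HTr /= /adjacent_cat [|[|[p [q [El Er]]]]].
  + case/adjacent_map=> x' [y' [Hadj [-> ->]]].
    by left; exists x', y'; split=> //; apply/succ_transE; exists Tl.
  + case/adjacent_map=> x' [y' [Hadj [-> ->]]].
    by right; left; exists x', y'; split=> //; apply/succ_transE; exists Tr.
  + have [p' Ep] := leaves_last Tl; have [q' Eq] := leaves_head Tr.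
    move: El Er; rewrite Ep Eq map_rcons => /rcons_inj [_ <-] [<- _].
    right; right; do 2 eexists; split; first by apply/right_boundaryP; exists Tl.
    by split=> //; apply/left_boundaryP; exists Tr.
- case=> [[x' [y' [/succ_transE [T HT Hadj] [-> ->]]]] |
          [[x' [y' [/succ_transE [T HT Hadj] [-> ->]]]] |
           [x' [y' [/right_boundaryP [Tl HTl ->]
                   [/left_boundaryP [Tr HTr ->] [-> ->]]]]]]];
    apply/succ_transE.
  + exists (BNode T BLeaf); first by rewrite /= HT.
    by apply/adjacent_cat; left; apply/adjacent_map; exists x', y'.
  + exists (BNode BLeaf T) => //.
    by apply/adjacent_cat; right; left; apply/adjacent_map; exists x', y'.
  + exists (BNode Tl Tr); first by rewrite /= HTl.
    have [p Ep] := leaves_last Tl; have [q Eq] := leaves_head Tr.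
    rewrite /=; apply/adjacent_cat; right; right.
    by exists (map (cons false) p), (map (cons true) q); rewrite Ep Eq map_rcons.
Qed.
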